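(* Let $m\ge 9$, $T=A_m$, $G\in\{A_m,S_m\}$, and let $H=(S_k\wr S_r)\cap G$ with $m=kr$ and $1<k<m$ be a maximal imprimitive subgroup of $G$. Consider $G$ acting on $\Omega$, the set of partitions of $\{1,\dots,m\}$ into $r$ subsets each of size $k$, so $n=\frac{(kr)!}{(k!)^r r!}$. Then $\mathrm{ifix}(T)>n^{1/2}$.
   Context: $\mathrm{ifix}(T)=\max\{\mathrm{fix}(t): t\in T \text{ an involution}\}$, where $\mathrm{fix}(t)$ is the number of points of $\Omega$ fixed by $t$. *)

From mathcomp Require Import all_boot all_fingroup all_solvable.
Set Implicit Arguments. Unset Strict Implicit. Unset Printing Implicit Defensive.


(* The natural action of permutations of 'I_m on sets of subsets of 'I_m:
   g maps a set system P to [set g @: B | B in P]. *)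
Definition part_act (m : nat) := (('P^*)^*)%act : action [set: {perm 'I_m}] {set {set 'I_m}}.

(* Omega = partitions of {0,..,m-1} into blocks all of size k
   (hence into r = m/k blocks when m = k*r). *)
Definition Omega (m k : nat) : {set {set {set 'I_m}}} :=
  [set P | partition P [set: 'I_m] && [forall B in P, #|B| == k]].

Definition fixnum (m k : nat) (t : {perm 'I_m}) : nat :=
  #|('Fix_(Omega m k | part_act m)[t])%g|.

Definition ifix (m k : nat) (T : {set {perm 'I_m}}) : nat :=
  \max_(t in T | #[t]%g == 2) fixnum k t.

(* Then
   #|Omega| < ifix(A_m)^2.

   The proof exhibits many fixed points of the even involution t = (a b)(c d).
   Write N for the number of partitions of m - 2k points into k-blocks.
   - For k >= 3, t fixes every partition in which a, b share a block avoiding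
     c, d while c, d share another block; there are
     'C(m-4, k-2) * 'C(m-k-2, k-2) * N of them.
   - For k = 2, t fixes the partitions into pairs containing {a,b} and {c,d},
     or {a,c} and {b,d}, or {a,d} and {b,c}: 3 * N of them.
   On the other hand #|Omega| = 'C(m-1, k-1) * 'C(m-k-1, k-1) * N, and
   binomial identities reduce the comparison to a cubic inequality in m, k. *)
From mathcomp Require Import all_boot all_fingroup all_solvable.
From mathcomp Require Import zify ring.
Set Implicit Arguments. Unset Strict Implicit. Unset Printing Implicit Defensive.

(* npart k j counts the partitions of a (k * j)-element set into blocks of
   size k: the block of a distinguished point is one of
   'C(k * j.-1 + k.-1, k.-1) sets, and the rest is partitioned recursively. *)
Fixpoint npart (k j : nat) : nat :=
  if j is j'.+1 then 'C(k * j' + k.-1, k.-1) * npart k j' else 1.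

Lemma npart_gt0 k j : 0 < npart k j.
Proof. by elim: j => //= j IH; rewrite muln_gt0 IH bin_gt0 leq_addl. Qed.

Section Counting.
Variables (T : finType) (k : nat).

Lemma disjoint_setD (A D : {set T}) : [disjoint A & D :\: A].
Proof. by rewrite disjoints_subset setDE setCI setCK subsetUr. Qed.

(* The supersets of X of size j inside D are counted by their parts outside X. *)
Lemma card_supsets (D X : {set T}) j : X \subset D -> #|X| <= j ->
  #|[set B : {set T} | [&& B \subset D, X \subset B & #|B| == j]]|
    = 'C(#|D| - #|X|, j - #|X|).
Proof.
move=> XD Xj; have -> : #|D| - #|X| = #|D :\: X| by rewrite cardsD (setIidPr XD).
rewrite -cards_draws.
have -> : [set B : {set T} | [&& B \subset D, X \subset B & #|B| == j]] =
   (fun A => X :|: A) @: [set A : {set T} | A \subset D :\: X & #|A| == j - #|X|].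
  apply/setP=> B; rewrite inE; apply/idP/imsetP.
  - case/and3P=> BD XB /eqP Bj; exists (B :\: X).
      by rewrite inE setSD //= cardsD (setIidPr XB) Bj.
    by rewrite setDE setUIr setUCr setIT (setUidPr XB).
  - case=> A; rewrite inE => /andP[AD /eqP Aj] ->.
    have dXA : [disjoint X & A] := disjointWr AD (disjoint_setD X D).
    rewrite subUset XD (subset_trans AD (subsetDl _ _)) subsetUl /=.
    by rewrite cardsU (disjoint_setI0 dXA) cards0 subn0 Aj; apply/eqP; lia.
apply: card_in_imset => A1 A2; rewrite !inE => /andP[A1D _] /andP[A2D _] E.
have [dX1 dX2] := (disjointWr A1D (disjoint_setD X D), disjointWr A2D (disjoint_setD X D)).
apply/setP=> x; move/setP: E => /(_ x); rewrite !inE.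
case: (boolP (x \in X)) => //= xX _.
by rewrite (disjointFr dX1 xX) (disjointFr dX2 xX).
Qed.

Definition kpart (D : {set T}) : {set {set {set T}}} :=
  [set P | partition P D && [forall B in P, #|B| == k]].

Lemma kpartP (D : {set T}) (P : {set {set T}}) :
  reflect (partition P D /\ forall B, B \in P -> #|B| = k) (P \in kpart D).
Proof.
rewrite inE; apply: (iffP andP) => [[pP /forall_inP kP]|[pP kP]]; split => //.
  by move=> B /kP /eqP.
by apply/forall_inP => B /kP ->.
Qed.

Lemma partitionU1_setD (P : {set {set T}}) (B D : {set T}) :
  B \subset D -> B != set0 -> partition P (D :\: B) -> partition (B |: P) D.
Proof.
move=> BD Bn0 pP; have := partitionU1 pP Bn0 (disjoint_setD B D).
by rewrite setDE setUIr setUCr setIT (setUidPr BD).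
Qed.

(* Fixing the block B of x, the partitions of D correspond to the
   partitions of D :\: B, by adding or removing the block B. *)
Lemma card_kpart_block (D B : {set T}) (x : T) (R : pred {set {set T}}) :
    x \in B -> B \subset D -> #|B| = k ->
  #|[set P in kpart D | (pblock P x == B) && R P]| =
  #|[set Q in kpart (D :\: B) | R (B |: Q)]|.
Proof.
move=> xB BD Bk; have Bn0 : B != set0 by apply/set0Pn; exists x.
have BnQ Q : Q \in kpart (D :\: B) -> B \notin Q.
  case/kpartP=> pQ _; apply/negP => BQ.
  by move: (subsetP (partitionS pQ BQ) x xB); rewrite inE xB.
rewrite -[RHS](@card_in_imset _ _ (fun Q => B |: Q)); last first.
  move=> Q1 Q2 /setIdP[Q1k _] /setIdP[Q2k _] E.
  by rewrite -(setU1K (BnQ _ Q1k)) E setU1K // BnQ.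
apply: eq_card => P; apply/idP/imsetP.
- move=> /setIdP[/kpartP[pP kP] /andP[/eqP pbB RP]].
  have BP : B \in P by rewrite -pbB pblock_mem // (cover_partition pP) (subsetP BD).
  exists (P :\ B); last by rewrite setD1K.
  apply/setIdP; rewrite setD1K //; split => //; apply/kpartP; split.
    exact: partitionD1.
  by move=> C /setD1P[_ /kP].
- case=> Q /setIdP[/kpartP[pQ kQ] RQ] ->.
  have pBQ := partitionU1_setD BD Bn0 pQ.
  rewrite inE RQ (def_pblock (partition_trivIset pBQ) (setU11 _ _) xB) eqxx !andbT.
  by apply/kpartP; split => // C /setU1P[->|/kQ].
Qed.

Definition blocks_at (D : {set T}) (x : T) : {set {set T}} :=
  [set B : {set T} | [&& B \subset D, [set x] \subset B & #|B| == k]].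

Lemma card_blocks_at (D : {set T}) (x : T) :
  x \in D -> 0 < k -> #|blocks_at D x| = 'C(#|D|.-1, k.-1).
Proof.
move=> xD k0; rewrite /blocks_at card_supsets ?sub1set ?cards1 //.
by congr 'C(_, _); lia.
Qed.

Lemma pblock_blocks_at (D : {set T}) (x : T) (P : {set {set T}}) :
  x \in D -> P \in kpart D -> pblock P x \in blocks_at D x.
Proof.
move=> xD /kpartP[pP kP]; have xP : x \in cover P by rewrite (cover_partition pP).
by rewrite inE (partitionS pP (pblock_mem xP)) sub1set mem_pblock xP kP ?eqxx // pblock_mem.
Qed.

Lemma card_kpart_sum (D : {set T}) (x : T) (R : pred {set {set T}}) : x \in D ->
  #|[set P in kpart D | R P]| =
  \sum_(B in blocks_at D x) #|[set P in kpart D | (pblock P x == B) && R P]|.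
Proof.
move=> xD; rewrite -sum1_card (partition_big (pblock^~ x) (mem (blocks_at D x))).
  apply: eq_bigr => B _; rewrite -sum1_card; apply: eq_bigl => P.
  by rewrite !inE -andbA (andbC (R P)).
by move=> P /setIdP[PD _]; apply: pblock_blocks_at.
Qed.

(* Removing the block of a point gives the recursion defining npart. *)
Lemma card_kpart (D : {set T}) j : 0 < k -> #|D| = k * j -> #|kpart D| = npart k j.
Proof.
move=> k0; elim: j D => [|j IH] D Dkj.
  move/eqP: Dkj; rewrite muln0 cards_eq0 => /eqP ->.
  apply/eq_card1 => P; rewrite !inE partition_set0.
  apply/andP/eqP => [[/eqP -> _] //|->]; split => //.
  by apply/forall_inP => B; rewrite inE.
have [x xD] : exists x, x \in D by apply/set0Pn; rewrite -card_gt0 Dkj; nia.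
have -> : kpart D = [set P in kpart D | predT P] by apply/setP => P; rewrite !inE andbT.
rewrite (card_kpart_sum _ xD) /= (_ : 'C(_, _) = #|blocks_at D x|); last first.
  by rewrite card_blocks_at // Dkj; congr 'C(_, _); lia.
rewrite -sum_nat_const; apply: eq_bigr => B; rewrite inE sub1set => /and3P[BD xB /eqP Bk].
rewrite card_kpart_block // -[RHS](IH (D :\: B)); last by rewrite cardsD (setIidPr BD) Bk Dkj; lia.
by apply: eq_card => Q; rewrite !inE andbT.
Qed.

Lemma card_kpart_pblock (D : {set T}) (x : T) (Q : pred {set T}) j :
    0 < k -> x \in D -> #|D| = k * j.+1 ->
  #|[set P in kpart D | Q (pblock P x)]| =
  #|[set B in blocks_at D x | Q B]| * npart k j.
Proof.
move=> k0 xD Dk; rewrite (card_kpart_sum _ xD) -sum_nat_const.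
rewrite big_mkcond [RHS]big_mkcond /=; apply: eq_bigr => B _; rewrite [in RHS]inE.
case: (boolP (B \in blocks_at D x)) => //= Bx.
move: (Bx); rewrite inE sub1set => /and3P[BD xB /eqP Bk].
have -> : [set P in kpart D | (pblock P x == B) && Q (pblock P x)] =
          [set P in kpart D | (pblock P x == B) && Q B].
  by apply/setP => P; rewrite !inE; case: eqP => // ->.
rewrite card_kpart_block //; case: (Q B) => /=; last by apply: eq_card0 => P; rewrite !inE andbF.
rewrite -(card_kpart (D := D :\: B) k0); last by rewrite cardsD (setIidPr BD) Bk Dk; lia.
by apply: eq_card => P; rewrite !inE andbT.
Qed.

Lemma card_kpart_pair (D : {set T}) (c d : T) j :
    1 < k -> c != d -> c \in D -> d \in D -> #|D| = k * j.+1 ->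
  #|[set P in kpart D | d \in pblock P c]| = 'C(#|D| - 2, k - 2) * npart k j.
Proof.
move=> k1 cd cD dD Dk; rewrite (@card_kpart_pblock _ _ (fun C => d \in C) j) //; last by lia.
congr (_ * _); have cd2 : #|[set c; d]| = 2 by rewrite cards2 cd.
rewrite -cd2 -card_supsets ?subUset ?sub1set ?cD ?dD ?cd2 //.
apply: eq_card => B; rewrite !inE subUset !sub1set.
by case: (B \subset D); case: (c \in B); case: (d \in B); case: (_ == k).
Qed.

Lemma pblock_setU1 (D B : {set T}) (Q : {set {set T}}) (c : T) :
  B \subset D -> B != set0 -> partition Q (D :\: B) -> c \in D :\: B ->
  pblock (B |: Q) c = pblock Q c.
Proof.
move=> BD Bn0 pQ cD; have cQ : c \in cover Q by rewrite (cover_partition pQ).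
have tBQ := partition_trivIset (partitionU1_setD BD Bn0 pQ).
by rewrite (def_pblock (B := pblock Q c) tBQ) ?setU1r ?pblock_mem ?mem_pblock.
Qed.

(* The partitions in which a and b share a block avoiding c and d, while
   c and d share another block: these are fixed by (a b)(c d). *)
Definition pair_sep (D : {set T}) (a b c d : T) := [set P in kpart D |
  [&& b \in pblock P a, c \notin pblock P a, d \notin pblock P a & d \in pblock P c]].

(* Given the block B of a (containing b, avoiding c and d), it remains to
   partition D :\: B with c and d in a common block. *)
Lemma card_pair_sep_block (D B : {set T}) (a b c d : T) j :
    1 < k -> c != d -> c \in D -> d \in D -> #|D| = k * j.+2 ->
    B \in blocks_at D a -> [&& b \in B, c \notin B & d \notin B] ->
  #|[set P in kpart D | (pblock P a == B) &&
     [&& b \in pblock P a, c \notin pblock P a, d \notin pblock P a & d \in pblock P c]]|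
  = 'C(#|D| - k - 2, k - 2) * npart k j.
Proof.
move=> k1 cd cD dD Dk; rewrite inE sub1set => /and3P[BD aB /eqP Bk] /and3P[bB cB dB].
have Bn0 : B != set0 by apply/set0Pn; exists a.
have cDB : c \in D :\: B by rewrite inE cB.
have DBk : #|D :\: B| = k * j.+1 by rewrite cardsD (setIidPr BD) Bk Dk; lia.
rewrite (eq_card (B := [set P in kpart D | (pblock P a == B) && (d \in pblock P c)])); last first.
  by move=> P; rewrite !inE; case: eqP => // ->; rewrite bB cB dB.
have -> : #|D| - k = #|D :\: B| by rewrite cardsD (setIidPr BD) Bk.
rewrite card_kpart_block // -(@card_kpart_pair _ c d) ?inE ?cB ?dB ?cD ?dD //.
apply: eq_card => Q; rewrite !inE; apply: andb_id2l => /andP[pQ _].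
by rewrite (pblock_setU1 BD Bn0 pQ cDB).
Qed.

(* The number of partitions in pair_sep, by choosing the block of a and
   then the block of c. *)
Lemma card_pair_sep (D : {set T}) (a b c d : T) j :
    1 < k -> uniq [:: a; b; c; d] -> [set a; b; c; d] \subset D -> #|D| = k * j.+2 ->
  #|pair_sep D a b c d| =
  'C(#|D| - 4, k - 2) * ('C(#|D| - k - 2, k - 2) * npart k j).
Proof.
move=> k1 /= U sD Dk.
have [aD bD cD dD] : [/\ a \in D, b \in D, c \in D & d \in D].
  by split; apply: (subsetP sD); rewrite !inE eqxx ?orbT.
move: U; rewrite !inE !negb_or => /and4P[/and3P[ab ac ad] /andP[bc bd] cd _].
pose sepB (B : {set T}) := [&& b \in B, c \notin B & d \notin B].
pose K := 'C(#|D| - k - 2, k - 2) * npart k j.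
have -> : #|pair_sep D a b c d| = \sum_(B in [set B in blocks_at D a | sepB B]) K.
  rewrite /pair_sep (card_kpart_sum _ aD) big_mkcond [RHS]big_mkcond /=.
  apply: eq_bigr => B _; rewrite [in RHS]inE.
  case: (boolP (B \in blocks_at D a)) => //= Ba; case: (boolP (sepB B)) => sB.
    exact: card_pair_sep_block.
  apply: eq_card0 => P; rewrite !inE.
  case: (eqVneq (pblock P a) B) => [->|_]; last by rewrite andbF.
  by move: sB; rewrite /sepB; case: (b \in B); case: (c \in B); case: (d \in B); rewrite ?andbF.
rewrite sum_nat_const; congr (_ * _).
have Dcd : #|D :\ c :\ d| = #|D| - 2.
  have := cardsD1 c D; have := cardsD1 d (D :\ c).
  by rewrite !inE dD cD eq_sym cd /=; lia.
have ab2 : #|[set a; b]| = 2 by rewrite cards2 ab.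
have -> : #|D| - 4 = #|D :\ c :\ d| - #|[set a; b]| by rewrite Dcd ab2; lia.
have -> : k - 2 = k - #|[set a; b]| by rewrite ab2.
rewrite -card_supsets ?ab2 //; last first.
  by rewrite subUset !sub1set !inE aD bD ac ad bc bd.
apply: eq_card => B; rewrite !inE !subsetD1 subUset !sub1set.
rewrite /sepB; case: (B \subset D); case: (a \in B); case: (b \in B);
by case: (c \in B); case: (d \in B); case: (_ == k).
Qed.
End Counting.

Section StableBlocks.
Variable T : finType.
Implicit Types (P : {set {set T}}) (B : {set T}) (t : {perm T}).

Lemma perm_imset_stable t B : (forall y, y \in B -> t y \in B) -> t @: B = B.
Proof.
move=> tB; apply/eqP; rewrite eqEcard card_imset ?leqnn ?andbT; last exact: perm_inj.
by apply/subsetP => _ /imsetP[y yB ->]; apply: tB.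
Qed.

Lemma perm_blocks_fixed P t :
  (forall B, B \in P -> t @: B \in P) -> [set (fun B => t @: B) B | B in P] = P.
Proof.
move=> tP; apply/eqP; rewrite eqEcard card_imset ?leqnn ?andbT.
  by apply/subsetP => _ /imsetP[B BP ->]; apply: tP.
by apply: imset_inj; apply: perm_inj.
Qed.

Lemma pblock_self P x : partition P setT -> x \in pblock P x.
Proof. by move=> pP; rewrite mem_pblock (cover_partition pP) inE. Qed.

Lemma pblock_in P x : partition P setT -> pblock P x \in P.
Proof. by move=> pP; rewrite pblock_mem // (cover_partition pP) inE. Qed.

Lemma pblock_eq P x y : partition P setT -> y \in pblock P x -> pblock P y = pblock P x.
Proof. by move=> pP; apply: same_pblock; apply: partition_trivIset pP. Qed.

Lemma stable_two_blocks P t (x1 y1 x2 y2 : T) : partition P setT ->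
    y1 \in pblock P x1 -> y2 \in pblock P x2 ->
    (forall v, v \notin [set x1; y1; x2; y2] -> t v = v) ->
    t @: pblock P x1 \in P -> t @: pblock P x2 \in P ->
  forall B, B \in P -> t @: B \in P.
Proof.
move=> pP y1x1 y2x2 tU tx1 tx2 B BP.
case: (set_0Vmem (B :&: [set x1; y1; x2; y2])) => [BU0|[u]].
  rewrite perm_imset_stable // => y yB; rewrite tU //; apply/negP => yU.
  by move/setP: BU0 => /(_ y); rewrite inE yB yU inE.
rewrite inE => /andP[uB uU].
rewrite -(def_pblock (partition_trivIset pP) BP uB).
move: uU; rewrite !inE => /orP[/orP[/orP[]|]|] /eqP->.
- exact: tx1.
- by rewrite (pblock_eq pP y1x1).
- exact: tx2.
- by rewrite (pblock_eq pP y2x2).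
Qed.

Lemma pblock_pair P (x y : T) : partition P setT ->
    (forall B, B \in P -> #|B| = 2) -> x != y -> y \in pblock P x ->
  pblock P x = [set x; y].
Proof.
move=> pP P2 xy yx; apply/esym/eqP.
by rewrite eqEcard subUset !sub1set pblock_self // yx cards2 xy P2 // pblock_in.
Qed.
End StableBlocks.

Definition dtransp (T : finType) (a b c d : T) : {perm T} := (tperm a b * tperm c d)%g.

Section DoubleTransposition.
Variables (T : finType) (a b c d : T).
Hypothesis abcd : uniq [:: a; b; c; d].

Let a_neq : [/\ a != b, a != c & a != d].
Proof. by move: abcd; rewrite /= !inE !negb_or => /and4P[/and3P[-> -> ->]]. Qed.

Let bcd_neq : [/\ b != c, b != d & c != d].
Proof. by move: abcd; rewrite /= !inE !negb_or => /and4P[_ /andP[-> ->] -> _]. Qed.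

Lemma dtransp_vals :
  [/\ dtransp a b c d a = b, dtransp a b c d b = a, dtransp a b c d c = d,
      dtransp a b c d d = c &
      forall v, v \notin [set a; b; c; d] -> dtransp a b c d v = v].
Proof.
have [[ab ac ad] [bc bd cd]] := (a_neq, bcd_neq).
rewrite /dtransp !permM tpermL tpermR (tpermD (x := c) (z := b))
  ?(tpermD (x := c) (z := a)) ?(eq_sym c) ?(eq_sym d) //.
rewrite (tpermD (z := c)) // (tpermD (z := d)) // tpermL tpermR.
split => // v; rewrite !inE => /norP[/norP[/norP[va vb] vc] vd].
by rewrite permM !tpermD // eq_sym.
Qed.

Lemma dtransp_Alt : dtransp a b c d \in Alt T.
Proof.
have [[ab _ _] [_ _ cd]] := (a_neq, bcd_neq).
by rewrite Alt_even odd_permM !odd_tperm ab cd.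
Qed.

Lemma dtransp_order : #[dtransp a b c d]%g = 2.
Proof.
have [ta tb tc td tv] := dtransp_vals.
apply: nt_prime_order => //.
  apply/permP => x; rewrite expgS expg1 permM perm1.
  have [xU|xU] := boolP (x \in [set a; b; c; d]); last by rewrite !tv.
  by move: xU; rewrite !inE => /orP[/orP[/orP[]|]|] /eqP->; rewrite ?ta ?tb ?tc ?td.
apply/eqP => /permP /(_ a); rewrite ta perm1 => /eqP.
by have [ab _ _] := a_neq; rewrite eq_sym (negbTE ab).
Qed.

(* Partitions in which {a, b} and {c, d} lie in two different blocks are
   fixed: each of these two blocks is mapped onto itself. *)
Lemma pair_sep_stable k P : partition P setT -> P \in pair_sep k setT a b c d ->
  forall B, B \in P -> dtransp a b c d @: B \in P.
Proof.
move=> pP; rewrite inE => /andP[_ /and4P[bA cA dA dC]].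
have [ta tb tc td tv] := dtransp_vals.
have aC : a \notin pblock P c.
  by apply: contra cA => /(pblock_eq pP) ->; rewrite pblock_self.
have bC : b \notin pblock P c.
  by apply: contra cA => /(pblock_eq pP) E; rewrite -(pblock_eq pP bA) E pblock_self.
have fixed_block x : (forall y, y \in pblock P x -> y \in [set a; b; c; d] ->
    dtransp a b c d y \in pblock P x) -> dtransp a b c d @: pblock P x = pblock P x.
  move=> tx; apply: perm_imset_stable => y yx.
  by have [/(tx _ yx)|/tv->] := boolP (y \in [set a; b; c; d]).
apply: (stable_two_blocks pP bA dC tv).
- rewrite fixed_block ?pblock_in // => y yA.
  rewrite !inE => /orP[/orP[/orP[]|]|] /eqP Ey; move: yA; rewrite Ey => yA.
  + by rewrite ta.
  + by rewrite tb pblock_self.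
  + by rewrite yA in cA.
  + by rewrite yA in dA.
- rewrite fixed_block ?pblock_in // => y yC.
  rewrite !inE => /orP[/orP[/orP[]|]|] /eqP Ey; move: yC; rewrite Ey => yC.
  + by rewrite yC in aC.
  + by rewrite yC in bC.
  + by rewrite tc.
  + by rewrite td pblock_self.
Qed.

(* Partitions into pairs containing the pairs {a, c} and {b, d} are fixed:
   these two blocks are exchanged. *)
Lemma crossed_pairs_stable P : partition P setT ->
    (forall B, B \in P -> #|B| = 2) -> c \in pblock P a -> d \in pblock P b ->
  forall B, B \in P -> dtransp a b c d @: B \in P.
Proof.
move=> pP P2 cA dB.
have [ta tb tc td tv] := dtransp_vals.
have [[_ ac _] [_ bd _]] := (a_neq, bcd_neq).
have eA := pblock_pair pP P2 ac cA; have eB := pblock_pair pP P2 bd dB.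
apply: (stable_two_blocks pP cA dB).
- by move=> v; rewrite (setUAC [set a]); apply: tv.
- by rewrite eA imsetU1 imset_set1 ta tc -eB pblock_in.
- by rewrite eB imsetU1 imset_set1 tb td -eA pblock_in.
Qed.
End DoubleTransposition.

Lemma uniq_swap23 (T : eqType) (a b c d : T) :
  uniq [:: a; b; c; d] -> uniq [:: a; c; b; d].
Proof.
by rewrite (perm_uniq (_ : perm_eq _ [:: a; c; b; d])) // perm_cons (perm_catCA [:: b] [:: c]).
Qed.

Lemma uniq_swap34 (T : eqType) (a b c d : T) :
  uniq [:: a; b; c; d] -> uniq [:: a; b; d; c].
Proof.
by rewrite (perm_uniq (_ : perm_eq _ [:: a; b; d; c])) // !perm_cons (perm_catC [:: c]).
Qed.

Lemma four_points m : 3 < m -> exists a b c d : 'I_m, uniq [:: a; b; c; d].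
Proof.
move=> m3; have [m0 m1 m2] : [/\ 0 < m, 1 < m & 2 < m] by split; lia.
by exists (Ordinal m0), (Ordinal m1), (Ordinal m2), (Ordinal m3).
Qed.

Lemma ifix_ge m k (t : {perm 'I_m}) (S : {set {set {set 'I_m}}}) :
    t \in Alt 'I_m -> #[t]%g = 2 -> S \subset Omega m k ->
    (forall P, P \in S -> forall B, B \in P -> t @: B \in P) ->
  #|S| <= ifix k (Alt 'I_m).
Proof.
move=> tA t2 SO tS; have tI : (t \in Alt 'I_m) && (#[t]%g == 2) by rewrite tA t2.
apply: (leq_trans _ (@leq_bigmax_cond _ (fun s => (s \in Alt _) && (#[s]%g == 2)) (fixnum k) t tI)).
apply: subset_leq_card.
apply/subsetP => P PS; rewrite inE (subsetP SO) //=; apply/afix1P.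
exact: perm_blocks_fixed (tS P PS).
Qed.

Lemma ifix_ge_pair_sep m k j : 1 < k -> m = k * j.+2 ->
  'C(m - 4, k - 2) * ('C(m - k - 2, k - 2) * npart k j) <= ifix k (Alt 'I_m).
Proof.
move=> k1 mk; have m3 : 3 < m by rewrite mk; nia.
have [a [b [c [d abcd]]]] := four_points m3.
have cardT : #|[set: 'I_m]| = m by rewrite cardsT card_ord.
rewrite -cardT -(card_pair_sep k1 abcd (subsetT _)) ?cardT //.
apply: ifix_ge (dtransp_Alt abcd) (dtransp_order abcd) _ _.
  by apply/subsetP => P /setIdP[].
by move=> P PS; case/setIdP: (PS) => /kpartP[pP _] _; apply: pair_sep_stable PS.
Qed.

(* For k = 2 the involution (a b)(c d) also fixes the partitions into pairs
   containing {a, c}, {b, d} or {a, d}, {b, c}: three disjoint families. *)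
Lemma ifix_ge_pairs m j : m = 2 * j.+2 -> 3 * npart 2 j <= ifix 2 (Alt 'I_m).
Proof.
move=> mj; have m3 : 3 < m by rewrite mj; lia.
have [a [b [c [d abcd]]]] := four_points m3.
have [acbd abdc] := (uniq_swap23 abcd, uniq_swap34 abcd).
have cardS (x y z w : 'I_m) : uniq [:: x; y; z; w] -> #|pair_sep 2 setT x y z w| = npart 2 j.
  move=> U; rewrite (@card_pair_sep _ _ _ _ _ _ _ j (isT : 1 < 2) U (subsetT _)) ?bin0 ?mul1n //.
  by rewrite cardsT card_ord mj.
set S1 := pair_sep 2 setT a b c d; set S2 := pair_sep 2 setT a c b d.
set S3 := pair_sep 2 setT a d b c.
have S12 : S1 :&: S2 = set0.
  apply/setP => P; rewrite !inE.
  by case: (c \in pblock P a); rewrite /= ?andbF.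
have S123 : (S1 :|: S2) :&: S3 = set0.
  apply/setP => P; rewrite !inE.
  by case: (d \in pblock P a); rewrite /= ?andbF.
have <- : #|S1 :|: S2 :|: S3| = 3 * npart 2 j.
  rewrite cardsU S123 cards0 subn0 cardsU S12 cards0 subn0 !cardS //; last exact: uniq_swap23.
  lia.
apply: ifix_ge (dtransp_Alt abcd) (dtransp_order abcd) _ _.
  by apply/subsetP => P; rewrite !inE => /orP[/orP[]|] /andP[].
move=> P PS; have [pP P2] : partition P setT /\ forall B, B \in P -> #|B| = 2.
  by apply/kpartP; move: PS; rewrite !inE => /orP[/orP[]|] /andP[].
move: PS => /setUP[/setUP[]|] PS; move: (PS); rewrite inE => /andP[_ /and4P[xy _ _ zw]].
- exact: pair_sep_stable PS.
- exact: crossed_pairs_stable.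
- rewrite /dtransp -(tpermC d c); exact: (crossed_pairs_stable abdc).
Qed.

Lemma bin_ge_self n j : 0 < j -> j < n -> n <= 'C(n, j).
Proof.
elim: n j => [|n IH] [|[|j]] // _ jn; first by rewrite bin1.
rewrite binS; have := IH j.+1 isT jn; have : 0 < 'C(n, j.+2) by rewrite bin_gt0.
lia.
Qed.

Lemma bin_ge_bin2 n j : 2 <= j -> j + 2 <= n -> 'C(n, 2) <= 'C(n, j).
Proof.
elim: n j => [|n IH] [|[|[|j]]] // _ jn.
rewrite binS [X in _ <= X]binS bin1.
have := IH j.+2 isT (_ : j.+2 + 2 <= n); have := @bin_ge_self n j.+3 isT (_ : j.+3 < n).
lia.
Qed.

Lemma two_blocks_identity m k : 2 <= k -> 2 * k <= m ->
  (k - 1) * (k - 1) * (m - k) * ('C(m - 1, k - 1) * 'C(m - k - 1, k - 1)) =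
  (m - 1) * (m - 2) * (m - 3) * ('C(m - 4, k - 2) * 'C(m - k - 2, k - 2)).
Proof.
move=> k2 km.
have e1 : (m - 1) * 'C(m - 2, k - 2) = (k - 1) * 'C(m - 1, k - 1).
  have := mul_bin_diag (m - 1) (k - 2).
  have -> : (m - 1).-1 = m - 2 by lia.
  by have -> : (k - 2).+1 = k - 1 by lia.
have e2 : (m - 2) * 'C(m - 3, k - 2) = (m - k) * 'C(m - 2, k - 2).
  have := mul_bin_down (m - 2) (k - 2).
  have -> : (m - 2).-1 = m - 3 by lia.
  by have -> : m - 2 - (k - 2) = m - k by lia.
have e3 : (m - 3) * 'C(m - 4, k - 2) = (m - k - 1) * 'C(m - 3, k - 2).
  have := mul_bin_down (m - 3) (k - 2).
  have -> : (m - 3).-1 = m - 4 by lia.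
  by have -> : m - 3 - (k - 2) = m - k - 1 by lia.
have e4 : (m - k - 1) * 'C(m - k - 2, k - 2) = (k - 1) * 'C(m - k - 1, k - 1).
  have := mul_bin_diag (m - k - 1) (k - 2).
  have -> : (m - k - 1).-1 = m - k - 2 by lia.
  by have -> : (k - 2).+1 = k - 1 by lia.
have q1_gt0 : 0 < m - k - 1 by lia.
apply/eqP; rewrite -(eqn_pmul2l q1_gt0); apply/eqP; move: e1 e2 e3 e4.
set C1 := 'C(m - 1, k - 1); set C2 := 'C(m - k - 1, k - 1).
set x := 'C(m - 4, k - 2); set y := 'C(m - k - 2, k - 2).
set u := 'C(m - 2, k - 2); set v := 'C(m - 3, k - 2).
set q1 := m - k - 1; set q := m - k; set k1 := k - 1.
move=> e1 e2 e3 e4.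
transitivity ((k1 * C1) * q * (k1 * C2) * q1); first by ring.
rewrite -e1 -e4; transitivity ((m - 1) * (q * u) * q1 * y * q1); first by ring.
rewrite -e2; transitivity ((m - 1) * (m - 2) * (q1 * v) * y * q1); first by ring.
by rewrite -e3; ring.
Qed.

(* By the identity, C1 C2 < (x y)^2 reduces to a cubic inequality. *)
Lemma two_blocks_lt_sq m k : 2 <= k -> 2 * k <= m ->
    (m - 1) * (m - 2) * (m - 3) <
      (k - 1) * (k - 1) * (m - k) * ('C(m - 4, k - 2) * 'C(m - k - 2, k - 2)) ->
  'C(m - 1, k - 1) * 'C(m - k - 1, k - 1) < ('C(m - 4, k - 2) * 'C(m - k - 2, k - 2)) ^ 2.
Proof.
move=> k2 km; have := two_blocks_identity k2 km.
set X := _ * 'C(m - k - 2, k - 2); set c := (k - 1) * _ * _ => eX cubic.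
have X_gt0 : 0 < X by rewrite muln_gt0 !bin_gt0; apply/andP; split; lia.
have c_gt0 : 0 < c by rewrite /c !muln_gt0; apply/andP; split; [apply/andP; split|]; lia.
by rewrite -(ltn_pmul2l c_gt0) eX expnS expn1 mulnA ltn_pmul2r.
Qed.

Lemma cubic_three_blocks m k : 3 <= k -> 3 * k <= m ->
  (m - 1) * (m - 2) * (m - 3) < (k - 1) * (k - 1) * (m - k) * ((m - 4) * (m - k - 2)).
Proof.
move=> k3 km; have [i ki] : exists i, k = i + 3 by exists (k - 3); lia.
subst k; have [e ->] : exists e, m = 3 * (i + 3) + e by exists (m - 3 * (i + 3)); lia.
have -> : 3 * (i + 3) + e - 1 = 3 * i + e + 8 by lia.
have -> : 3 * (i + 3) + e - 2 = 3 * i + e + 7 by lia.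
have -> : 3 * (i + 3) + e - 3 = 3 * i + e + 6 by lia.
have -> : 3 * (i + 3) + e - 4 = 3 * i + e + 5 by lia.
have -> : 3 * (i + 3) + e - (i + 3) = 2 * i + e + 6 by lia.
have -> : 2 * i + e + 6 - 2 = 2 * i + e + 4 by lia.
have -> : i + 3 - 1 = i + 2 by lia.
nia.
Qed.

(* The cubic inequality with exactly two blocks, given x >= 'C(2k - 4, 2). *)
Lemma cubic_two_blocks k x : 5 <= k -> (2 * k - 4) * (2 * k - 5) <= 2 * x ->
  (2 * k - 1) * (2 * k - 2) * (2 * k - 3) < (k - 1) * (k - 1) * k * x.
Proof.
move=> k5; have [i ->] : exists i, k = i + 5 by exists (k - 5); lia.
have -> : 2 * (i + 5) - 4 = 2 * i + 6 by lia.
have -> : 2 * (i + 5) - 5 = 2 * i + 5 by lia.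
have -> : 2 * (i + 5) - 1 = 2 * i + 9 by lia.
have -> : 2 * (i + 5) - 2 = 2 * i + 8 by lia.
have -> : 2 * (i + 5) - 3 = 2 * i + 7 by lia.
have -> : i + 5 - 1 = i + 4 by lia.
nia.
Qed.

Lemma npart_lt_sq m k j : 3 <= k -> 9 <= m -> m = k * j.+2 ->
  npart k j.+2 < ('C(m - 4, k - 2) * ('C(m - k - 2, k - 2) * npart k j)) ^ 2.
Proof.
move=> k3 m9 mk.
have -> : npart k j.+2 = 'C(m - 1, k - 1) * 'C(m - k - 1, k - 1) * npart k j.
  by rewrite /= mulnA; congr ('C(_, _) * 'C(_, _) * _); lia.
have lt_sq : 'C(m - 1, k - 1) * 'C(m - k - 1, k - 1) <
             ('C(m - 4, k - 2) * 'C(m - k - 2, k - 2)) ^ 2.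
  apply: two_blocks_lt_sq; [lia | nia | case: j mk => [|j] mk].
  - have k5 : 5 <= k by lia.
    have mk2 : m = 2 * k by lia.
    have -> : m - k - 2 = k - 2 by lia.
    rewrite binn muln1 (_ : m - k = k); last by lia.
    rewrite mk2; apply: cubic_two_blocks => //.
    have e2 := mul_bin_diag (2 * k - 4) 1; rewrite bin1 in e2.
    rewrite (_ : 2 * k - 5 = (2 * k - 4).-1); last by lia.
    by rewrite e2 leq_mul2l /=; apply: bin_ge_bin2; lia.
  - have km3 : 3 * k <= m by rewrite mk; nia.
    apply: (leq_trans (cubic_three_blocks k3 km3)); rewrite leq_mul2l; apply/orP; right.
    by apply: leq_mul; apply: bin_ge_self; lia.
move: lt_sq (npart_gt0 k j).
set x := 'C(m - 4, k - 2); set y := 'C(m - k - 2, k - 2).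
set M := npart k j => lt_sq M_gt0.
rewrite (_ : (x * (y * M)) ^ 2 = (x * y) ^ 2 * M * M); last by ring.
by rewrite -(ltn_pmul2r M_gt0) in lt_sq; apply: (leq_trans lt_sq); rewrite leq_pmulr.
Qed.

Lemma npart_pairs_lt_sq j : 3 <= j -> npart 2 j.+2 < (3 * npart 2 j) ^ 2.
Proof.
move=> j3; have [i ->] : exists i, j = i.+3 by exists (j - 3); lia.
have npartS n : npart 2 n.+1 = (2 * n + 1) * npart 2 n by rewrite /= bin1.
have e5 : npart 2 i.+4.+1 = (2 * i + 9) * (2 * i + 7) * npart 2 i.+3.
  by rewrite (npartS i.+4) (npartS i.+3) mulnA; congr (_ * _ * _); lia.
have a_ge : (2 * i + 5) * (2 * i + 3) <= npart 2 i.+3.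
  rewrite (npartS i.+2) (npartS i.+1) mulnA -[X in X <= _]muln1.
  by rewrite leq_mul ?npart_gt0 // leq_mul; lia.
rewrite e5; set a := npart 2 i.+3 in a_ge *.
have -> : (3 * a) ^ 2 = 9 * a * a by ring.
rewrite ltn_pmul2r; last by lia.
apply: (@leq_trans (9 * ((2 * i + 5) * (2 * i + 3)))); first by nia.
by rewrite leq_mul2l.
Qed.

Theorem proposition2p5 (m k r : nat) (G H : {group {perm 'I_m}}) :
  9 <= m -> m = k * r -> 1 < k < m ->
  (G = Alt 'I_m :> {set _} \/ G = Sym 'I_m :> {set _}) ->
  (exists2 P0, P0 \in Omega m k & (H :=: ('C_G[P0 | part_act m])%g)%g) ->
  maximal H G ->
  #|Omega m k| < ifix k (Alt 'I_m) ^ 2.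
Proof.
move=> m9 mkr /andP[k1 km] _ _ _.
have [j rj] : exists j, r = j.+2 by exists r.-2; rewrite mkr in km; nia.
have mk : m = k * j.+2 by rewrite mkr rj.
have -> : #|Omega m k| = npart k j.+2.
  by apply: card_kpart; [lia | rewrite cardsT card_ord].
have [k3|k2] := ltnP 2 k.
  apply: (leq_trans (npart_lt_sq k3 m9 mk)); rewrite leq_exp2r //.
  exact: ifix_ge_pair_sep.
have k_eq2 : k = 2 by lia.
subst k; have j3 : 3 <= j by lia.
apply: (leq_trans (npart_pairs_lt_sq j3)); rewrite leq_exp2r //.
exact: ifix_ge_pairs.
Qed.
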